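(* Let $P$ be a $\mathcal{V}$-poset, $A$ a maximal antichain of $P$, and let $P\cup\{g\}$ be obtained by adding a new greatest element $g$. For $a\in A$ let $P_a$ be the set related to $a$ computed in $P$ and $P'_a$ the set related to $a$ computed in $P\cup\{g\}$. Then: (i) the number $b(A)$ of basic elements in $A$ is the same in $P$ and in $P\cup\{g\}$; (ii) if $a$ is an upper element, $P'_a=P_a$; (iii) if $a$ is a lower element not associated to the set of all basic elements of $P$, then $P'_a=P_a$; (iv) if $a$ is a lower element associated to the set of all basic elements of $P$, then $P'_a=P_a\cup\{g\}$.
   Context: All posets are finite. A $\mathcal{V}$-poset is a poset generated from the empty poset by repeatedly applying: disjoint union of $\mathcal{V}$-posets, adding a new greatest element, adding a new least element. An element $x$ is basic if: (B.1) there are no two incomparable elements $u,v$ with $x>u$ and $x>v$; (B.2) there are no two incomparable elements $u,v$ with $x<u$ and $x<v$; (B.3) there is no element $u$ with $u<x$ such that for all $w\neq u,x$ one has ($u\ge w\iff x\ge w$) and ($u\le w\iff x\le w$). An element is associated to a set $B$ of basic elements if it is comparable to every element of $B$ and incomparable to every other basic element. A non-basic element $u$ is upper if $u>b$ for some basic $b$, and lower if $u<b$ for some basic $b$. For an element $a$ of a $\mathcal{V}$-poset $Q$, the set related to $a$ in $Q$ is defined as follows: if $a$ is basic, $Q_a=\emptyset$; otherwise let $B$ be the set of basic elements to which $a$ is associated; if $a$ is a lower element, $Q_a=\{b\in Q: a<b,\ \text{there is no } c \text{ with } c<b \text{ and } c \text{ incomparable to } a\}$; if $a$ is an upper element, $Q_a=\{b\in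 Q: a>b,\ \text{there is no } c \text{ with } c>b \text{ and } c \text{ incomparable to } a\}\setminus\{\ell\in Q: \ell \text{ is a lower element associated to } B\}$. *)

From mathcomp Require Import all_boot.
Set Implicit Arguments. Unset Strict Implicit. Unset Printing Implicit Defensive.

Section PosetDefs.
Variables (T : finType) (le : rel T).

Definition plt (x y : T) : bool := (x != y) && le x y.
Definition pcomp (x y : T) : bool := le x y || le y x.

(* (B.1), (B.2), (B.3) *)
Definition basic (x : T) : bool :=
  [&& ~~ [exists u, exists v, [&& plt u x, plt v x & ~~ pcomp u v]],
      ~~ [exists u, exists v, [&& plt x u, plt x v & ~~ pcomp u v]] &
      ~~ [exists u, plt u x &&
            [forall w, ((w != u) && (w != x)) ==>
                       ((le w u == le w x) && (le u w == le x w))]]].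

Definition basics : {set T} := [set x | basic x].

Definition assoc (x : T) (B : {set T}) : bool :=
  (B \subset basics) && [forall b in basics, pcomp x b == (b \in B)].

Definition assoc_set (x : T) : {set T} := [set b in basics | pcomp x b].

Definition upper (u : T) : bool := ~~ basic u && [exists b in basics, plt b u].
Definition lower (u : T) : bool := ~~ basic u && [exists b in basics, plt u b].

Definition related (a : T) : {set T} :=
  if basic a then set0
  else if lower a then
    [set b | plt a b && ~~ [exists c, plt c b && ~~ pcomp c a]]
  else if upper a then
    [set b | plt b a && ~~ [exists c, plt b c && ~~ pcomp c a]]
      :\: [set l | lower l && assoc l (assoc_set a)]
  else set0.

Definition antichain (A : {set T}) : Prop :=
  forall x y, x \in A -> y \in A -> le x y -> x = y.

Definition maximal_antichain (A : {set T}) : Prop :=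
  antichain A /\ forall x, exists2 y, y \in A & pcomp x y.

End PosetDefs.

Definition sum_le (T1 T2 : finType) (le1 : rel T1) (le2 : rel T2) : rel (T1 + T2)%type :=
  fun x y => match x, y with
             | inl a, inl b => le1 a b
             | inr a, inr b => le2 a b
             | _, _ => false
             end.

(* adding a new greatest element (None) *)
Definition addtop (T : finType) (le : rel T) : rel (option T) :=
  fun x y => match x, y with
             | Some a, Some b => le a b
             | _, None => true
             | None, Some _ => false
             end.

Definition addbot (T : finType) (le : rel T) : rel (option T) :=
  fun x y => match x, y with
             | Some a, Some b => le a b
             | None, _ => true
             | Some _, None => false
             end.

(* V-posets, up to order isomorphism *)
Inductive isV : forall (T : finType), rel T -> Prop :=
| isV_empty : isV (fun _ _ : void => false)
| isV_union (T1 T2 : finType) (le1 : rel T1) (le2 : rel T2) :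
    isV le1 -> isV le2 -> isV (sum_le le1 le2)
| isV_top (T : finType) (le : rel T) : isV le -> isV (addtop le)
| isV_bot (T : finType) (le : rel T) : isV le -> isV (addbot le)
| isV_iso (T T' : finType) (le : rel T) (le' : rel T') (f : T -> T') :
    isV le -> bijective f -> (forall x y, le' (f x) (f y) = le x y) -> isV le'.

From mathcomp Require Import all_boot.
Set Implicit Arguments. Unset Strict Implicit. Unset Printing Implicit Defensive.

(* Adding a top [g] to [P] changes neither which old elements are
   basic ([g] is comparable to everything) nor lets [g] be basic: when [P] is
   nonempty, either two incomparable elements lie below [g], against (B.1), or
   [P] is a chain and its largest element is a twin of [g], against (B.3).
   Hence upper and lower elements and associations are unchanged, and the
   related set of [a] can only gain [g], which happens exactly when [a] is
   lower and comparable to every element.  An upper element that is also lower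
   (which [related] treats as lower) lies strictly between two basic elements,
   so it is incomparable to something.  Finally, in a V-poset an element
   incomparable to some element is incomparable to some basic element (by
   induction on the construction), so a lower element is comparable to
   everything iff it is associated to all basic elements. *)

Lemma existsO (T : finType) (P : pred (option T)) :
  [exists x, P x] = P None || [exists x, P (Some x)].
Proof.
apply/existsP/orP => [[[x|] Px] | [PN | /existsP [x Px]]].
- by right; apply/existsP; exists x.
- by left.
- by exists None.
- by exists (Some x).
Qed.

Lemma forallO (T : finType) (P : pred (option T)) :
  [forall x, P x] = P None && [forall x, P (Some x)].
Proof.
apply/negb_inj; rewrite negb_and !negb_forall.
exact: (existsO (fun x => ~~ P x)).
Qed.

Lemma None_imset_Some (T : finType) (A : {set T}) : (None \in Some @: A) = false.
Proof. by apply/imsetP => -[]. Qed.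

Lemma codom_Some (T : finType) (u : option T) : u \notin codom Some -> u = None.
Proof. by case: u => // u; rewrite codom_f. Qed.

Section Basic.
Variables (T : finType) (le : rel T).

Definition porder := [/\ reflexive le, antisymmetric le & transitive le].

Definition twin (u x : T) :=
  forall w, w != u -> w != x -> le w u = le w x /\ le u w = le x w.

Definition basic_separated :=
  forall x y, ~~ pcomp le x y -> exists2 b, basic le b & ~~ pcomp le x b.

Definition separated_poset :=
  [/\ porder, T -> exists b, basic le b & basic_separated].

Lemma pcompC x y : pcomp le x y = pcomp le y x.
Proof. by rewrite /pcomp orbC. Qed.

Lemma total_or_incomparable : total le \/ exists x y, ~~ pcomp le x y.
Proof.
have [tot | /forallPn [x /forallPn [y nxy]]] := boolP [forall x, [forall y, pcomp le x y]].
  by left => x y; apply: (forallP (forallP tot x)).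
by right; exists x, y.
Qed.

Lemma plt_pcomp u x : plt le u x -> pcomp le u x.
Proof. by case/andP => _ lux; rewrite /pcomp lux. Qed.

Lemma basicP x :
  reflect [/\ forall u v, plt le u x -> plt le v x -> pcomp le u v,
              forall u v, plt le x u -> plt le x v -> pcomp le u v &
              forall u, plt le u x -> ~ twin u x]
          (basic le x).
Proof.
apply: (iffP and3P) => -[h1 h2 h3]; split.
- move=> u v hu hv; apply: contraNT h1 => nc.
  by apply/existsP; exists u; apply/existsP; exists v; apply/and3P.
- move=> u v hu hv; apply: contraNT h2 => nc.
  by apply/existsP; exists u; apply/existsP; exists v; apply/and3P.
- move=> u hu tw; case/existsP: h3; exists u; rewrite hu /=.
  apply/forallP => w; apply/implyP => /andP [wu wx].
  by have [-> ->] := tw w wu wx; rewrite !eqxx.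
- apply/existsP => -[u /existsP [v /and3P [hu hv]]].
  by rewrite (h1 u v hu hv).
- apply/existsP => -[u /existsP [v /and3P [hu hv]]].
  by rewrite (h2 u v hu hv).
- apply/existsP => -[u /andP [hu /forallP tw]]; apply: (h3 u hu) => w wu wx.
  by move: (tw w); rewrite wu wx => /andP [/eqP -> /eqP ->].
Qed.

Section Poset.
Hypothesis po : porder.

Lemma ex_maximal (Q : pred T) x0 : Q x0 ->
  exists2 m, Q m & forall w, Q w -> le m w -> w = m.
Proof.
case: po => refl anti trans Qx0.
pose down w := [set z | le z w].
have [m Qm m_max] := arg_maxnP (fun w => #|down w|) Qx0.
exists m => // w Qw lmw; apply: contraTeq (m_max w Qw) => nwm; rewrite -ltnNge.
apply/proper_card/properP; split.
  by apply/subsetP => z; rewrite !inE => /trans; apply.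
exists w; rewrite !inE ?refl //; apply: contra nwm => lwm.
by apply/eqP/anti; rewrite lwm lmw.
Qed.

(* In a chain, a basic element with a strict predecessor would have the
   largest such predecessor as a twin, against (B.3). *)
Lemma total_basic_least b : total le -> basic le b -> forall w, le b w.
Proof.
case: po => refl anti trans tot /basicP [_ _ no_twin] w.
apply: contraT => nbw.
have ltwb : plt le w b.
  rewrite /plt; have := tot b w; rewrite (negbTE nbw) /= => -> .
  by rewrite andbT; apply: contraNneq nbw => ->.
have [m /andP [nmb lmb] m_max] := ex_maximal (Q := fun z => plt le z b) ltwb.
exfalso; apply: (no_twin m); first exact/andP.
move=> z nzm nzb.
have z_eq_m : le z b -> le m z -> z = m by move=> lzb; apply: m_max; rewrite /plt nzb.
split; apply/idP/idP.
- by move/trans; apply.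
- by move=> lzb; case/orP: (tot z m) => // lmz; rewrite (z_eq_m lzb lmz) eqxx in nzm.
- by move=> lmz; case/orP: (tot b z) => // lzb; rewrite (z_eq_m lzb lmz) eqxx in nzm.
- by move=> lbz; apply: trans lbz.
Qed.

Lemma le_plt_trans u a b : le u a -> plt le a b -> plt le u b.
Proof.
case: po => _ anti trans lua /andP [nab lab].
rewrite /plt (trans _ _ _ lua lab) andbT; apply: contraNneq nab => eub.
by apply/eqP/anti; rewrite lab -eub lua.
Qed.

Lemma plt_le_trans b a u : plt le b a -> le a u -> plt le b u.
Proof.
case: po => _ anti trans /andP [nba lba] lau.
rewrite /plt (trans _ _ _ lba lau) andbT; apply: contraNneq nba => ebu.
by apply/eqP/anti; rewrite lba ebu lau.
Qed.

(* Every element is below or above [a], hence below [b2] or above [b1], so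
   (B.1) at [b2] and (B.2) at [b1] make the poset a chain, in which [b2]
   would have to be the least element. *)
Lemma between_basics_incomparable b1 a b2 :
  basic le b1 -> basic le b2 -> plt le b1 a -> plt le a b2 ->
  ~~ [forall c, pcomp le c a].
Proof.
move=> /basicP [_ above_b1 _] bb2 lt1a lta2; apply/negP => /forallP comp_a.
have [_ anti trans] := po.
have tot : total le.
  have [below_b2 _ _] := basicP _ bb2.
  move=> u v; case/orP: (comp_a u) => [lua|lau]; case/orP: (comp_a v) => [lva|lav].
  - by apply: below_b2; apply: le_plt_trans lta2.
  - by rewrite /pcomp (trans _ _ _ lua lav).
  - by rewrite /pcomp (trans _ _ _ lva lau) orbT.
  - by apply: above_b1; apply: plt_le_trans lt1a _.
have lb2a := total_basic_least tot bb2 a.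
by case/andP: lta2 => /eqP na2 la2; apply: na2; apply: anti; rewrite la2 lb2a.
Qed.

End Poset.

Lemma assoc_basicsE x :
  basic_separated -> assoc le x (basics le) = [forall c, pcomp le c x].
Proof.
move=> sep; rewrite /assoc subxx /=; apply/forallP/forallP => [assoc_x c | comp_x b].
- apply: contraT; rewrite pcompC => /sep [b bb nxb].
  by have := assoc_x b; rewrite inE bb (negbTE nxb).
- by apply/implyP; rewrite inE => ->; rewrite pcompC comp_x.
Qed.

End Basic.

Section Embedding.
Variables (T T' : finType) (le : rel T) (le' : rel T') (f : T -> T').
Hypotheses (f_inj : injective f) (f_mono : forall x y, le' (f x) (f y) = le x y).

Lemma plt_embed u x : plt le' (f u) (f x) = plt le u x.
Proof. by rewrite /plt f_mono (inj_eq f_inj). Qed.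

Lemma pcomp_embed u x : pcomp le' (f u) (f x) = pcomp le u x.
Proof. by rewrite /pcomp !f_mono. Qed.

Lemma basic_embed x :
  (forall u', u' \notin codom f -> pcomp le' u' (f x) -> forall v', pcomp le' u' v') ->
  (forall u', u' \notin codom f -> plt le' u' (f x) -> ~ twin le' u' (f x)) ->
  basic le x -> basic le' (f x).
Proof.
move=> out_comp out_twin /basicP [below above no_twin]; apply/basicP; split.
- move=> u' v'.
  have [/codomP [u ->] | /out_comp out_u] := boolP (u' \in codom f); last first.
    by move=> /plt_pcomp ltu _; apply: out_u.
  have [/codomP [v ->] | /out_comp out_v] := boolP (v' \in codom f); last first.
    by move=> _ /plt_pcomp ltv; rewrite pcompC; apply: out_v.
  by rewrite !plt_embed pcomp_embed; apply: below.
- move=> u' v'.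
  have [/codomP [u ->] | /out_comp out_u] := boolP (u' \in codom f); last first.
    by move=> /plt_pcomp ltu _; apply: out_u; rewrite pcompC.
  have [/codomP [v ->] | /out_comp out_v] := boolP (v' \in codom f); last first.
    by move=> _ /plt_pcomp ltv; rewrite pcompC; apply: out_v; rewrite pcompC.
  by rewrite !plt_embed pcomp_embed; apply: above.
- move=> u'; have [/codomP [u ->] | out_u] := boolP (u' \in codom f).
    rewrite plt_embed => ltu tw; apply: (no_twin u ltu) => w wu wx.
    by rewrite -!f_mono; apply: tw; rewrite inj_eq.
  exact: out_twin.
Qed.

Lemma basic_embedV x :
  (forall w', w' \notin codom f -> forall u v,
     le' w' (f u) = le' w' (f v) /\ le' (f u) w' = le' (f v) w') ->
  basic le' (f x) -> basic le x.
Proof.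
move=> out_uniform /basicP [below above no_twin]; apply/basicP; split.
- by move=> u v; rewrite -!plt_embed -pcomp_embed; apply: below.
- by move=> u v; rewrite -!plt_embed -pcomp_embed; apply: above.
- move=> u ltu tw; apply: (no_twin (f u)); first by rewrite plt_embed.
  move=> w'; have [/codomP [w ->] | /out_uniform out_w _ _] := boolP (w' \in codom f).
    by rewrite !(inj_eq f_inj) !f_mono; apply: tw.
  exact: out_w.
Qed.

End Embedding.

Section Sum.
Variables (T1 T2 : finType) (le1 : rel T1) (le2 : rel T2).
Local Notation le := (sum_le le1 le2).

Lemma porder_sum : porder le1 -> porder le2 -> porder le.
Proof.
move=> [r1 a1 t1] [r2 a2 t2]; split.
- by case=> x /=.
- by case=> x [] y //= => [/a1 | /a2] ->.
- by case=> y [] x [] z //=; [apply: t1 | apply: t2].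
Qed.

Lemma basic_inl x : basic le1 x -> basic le (inl x).
Proof.
apply: basic_embed => //; first exact: inl_inj.
all: by case=> u //; rewrite codom_f.
Qed.

Lemma basic_inr x : basic le2 x -> basic le (inr x).
Proof.
apply: basic_embed => //; first exact: inr_inj.
all: by case=> u //; rewrite codom_f.
Qed.

Lemma separated_sum :
  separated_poset le1 -> separated_poset le2 -> separated_poset le.
Proof.
move=> [po1 ex1 sep1] [po2 ex2 sep2]; split; first exact: porder_sum.
- case=> [/ex1 | /ex2] [b bb]; [exists (inl b) | exists (inr b)].
  + exact: basic_inl.
  + exact: basic_inr.
- case=> x [] y.
  + by case/sep1 => b bb nxb; exists (inl b) => //; apply: basic_inl.
  + by have [b bb] := ex2 y; exists (inr b) => //; apply: basic_inr.
  + by have [b bb] := ex1 y; exists (inl b) => //; apply: basic_inl.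
  + by case/sep2 => b bb nxb; exists (inr b) => //; apply: basic_inr.
Qed.

End Sum.

Section AddTop.
Variables (T : finType) (le : rel T).
Local Notation le' := (addtop le).

Lemma pcomp_addtop_top x : pcomp le' x None.
Proof. by case: x. Qed.

Lemma plt_top_addtop x : plt le' None x = false.
Proof. by case: x => [x|]; rewrite /plt ?andbF. Qed.

Lemma plt_addtop_top x : plt le' (Some x) None.
Proof. by []. Qed.

Lemma porder_addtop : porder le -> porder le'.
Proof.
move=> [refl anti trans]; split.
- by case.
- by case=> [x|] [y|] //= /anti ->.
- by case=> [y|] [x|] [z|] //; apply: trans.
Qed.

Lemma basic_addtop x : basic le' (Some x) = basic le x.
Proof.
apply/idP/idP; [apply: basic_embedV | apply: basic_embed] => //; try exact: Some_inj.
- by move=> w' /codom_Some ->.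
- by move=> u' /codom_Some -> _ v'; rewrite pcompC pcomp_addtop_top.
- by move=> u' /codom_Some ->; rewrite plt_top_addtop.
Qed.

Lemma basic_addtop_empty : (T -> False) -> basic le' None.
Proof.
by move=> no_elt; apply/basicP; split=> [[u|] [v|] | [u|] [v|] | [u|]].
Qed.

Lemma not_basic_addtop_top (a : T) : porder le -> ~~ basic le' None.
Proof.
move=> po; apply/negP => bN.
have [tot | [x [y nxy]]] := total_or_incomparable le.
  have tot' : total le' by case=> [x|] [y|] //; apply: tot.
  by have := total_basic_least (porder_addtop po) tot' bN (Some a).
case/basicP: bN => below _ _; case/negP: nxy.
exact: below (Some x) (Some y) isT isT.
Qed.

Lemma separated_addtop : separated_poset le -> separated_poset le'.
Proof.
move=> [po ex sep]; split; first exact: porder_addtop.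
- move=> _; case: (pickP (@predT T)) => [x _ | no_elt].
    by have [b bb] := ex x; exists (Some b); rewrite basic_addtop.
  by exists None; apply: basic_addtop_empty => x; have := no_elt x.
- case=> [x|] [y|]; rewrite ?pcomp_addtop_top // pcompC ?pcomp_addtop_top //.
  by rewrite pcompC => /sep [b bb nxb]; exists (Some b); rewrite ?basic_addtop.
Qed.

Lemma setI_basics_addtop (A : {set T}) :
  Some @: A :&: basics le' = Some @: (A :&: basics le).
Proof.
apply/setP => -[x|]; rewrite in_setI ?None_imset_Some //.
by rewrite !(mem_imset _ _ Some_inj) in_setI !inE basic_addtop.
Qed.

End AddTop.

Section AddBot.
Variables (T : finType) (le : rel T).
Local Notation le' := (addbot le).

Lemma pcomp_addbot_bot x : pcomp le' None x.
Proof. by case: x. Qed.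

Lemma porder_addbot : porder le -> porder le'.
Proof.
move=> [refl anti trans]; split.
- by case.
- by case=> [x|] [y|] //= /anti ->.
- by case=> [y|] [x|] [z|] //; apply: trans.
Qed.

(* If [x] were least, the new bottom would be a twin of [Some x]. *)
Lemma basic_addbot x w : reflexive le -> ~~ le x w -> basic le x -> basic le' (Some x).
Proof.
move=> refl nxw; apply: basic_embed => //; first exact: Some_inj.
- by move=> u' /codom_Some -> _ v'; rewrite pcomp_addbot_bot.
move=> u' /codom_Some -> _ /(_ (Some w) isT) [] //=; last by rewrite (negbTE nxw).
by apply: contraNneq nxw => -[->]; rewrite refl.
Qed.

Lemma basic_addbot_bot : total le -> basic le' None.
Proof.
move=> tot; apply/basicP; split; try by case.
by case=> [u|] [v|] // _ _; apply: tot.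
Qed.

Lemma separated_addbot : separated_poset le -> separated_poset le'.
Proof.
move=> [po ex sep].
have basic_new b x : basic le b -> ~~ pcomp le x b -> basic le' (Some b).
  move=> bb nxb; have [refl _ _] := po; apply: (basic_addbot (w := x)) bb => //.
  by apply: contra nxb => lbx; rewrite pcompC /pcomp lbx.
split; first exact: porder_addbot.
- move=> _; have [tot | [x [y /sep [b bb nxb]]]] := total_or_incomparable le.
    by exists None; apply: basic_addbot_bot.
  by exists (Some b); apply: basic_new nxb.
- case=> [x|] [y|]; rewrite ?pcomp_addbot_bot // pcompC ?pcomp_addbot_bot //.
  by rewrite pcompC => /sep [b bb nxb]; exists (Some b) => //; apply: basic_new nxb.
Qed.

End AddBot.

Section Iso.
Variables (T T' : finType) (le : rel T) (le' : rel T') (f : T -> T').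
Hypotheses (f_bij : bijective f) (f_mono : forall x y, le' (f x) (f y) = le x y).

Lemma codom_bij u' : u' \in codom f.
Proof. by have [g _ gK] := f_bij; rewrite -[u']gK codom_f. Qed.

Lemma basic_iso x : basic le x -> basic le' (f x).
Proof.
apply: basic_embed => //; first exact: bij_inj.
all: by move=> u'; rewrite codom_bij.
Qed.

Lemma separated_iso : separated_poset le -> separated_poset le'.
Proof.
have [g fK gK] := f_bij.
move=> [[refl anti trans] ex sep]; split; first split.
- by move=> x; rewrite -[x]gK f_mono.
- by move=> x y; rewrite -[x]gK -[y]gK !f_mono => /anti ->.
- by move=> y x z; rewrite -[x]gK -[y]gK -[z]gK !f_mono; apply: trans.
- by move=> x; have [b bb] := ex (g x); exists (f b); apply: basic_iso.
- move=> x y; rewrite -[x]gK -[y]gK (pcomp_embed f_mono).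
  case/sep => b bb nxb; exists (f b); first exact: basic_iso.
  by rewrite (pcomp_embed f_mono).
Qed.

End Iso.

Lemma isV_separated (T : finType) (le : rel T) : isV le -> separated_poset le.
Proof.
elim=> {T le} [| ? ? ? ? _ ? _ | ? ? _ | ? ? _ | ? ? ? ? f _ ? f_bij f_mono].
- by split; [split; case | case | case].
- exact: separated_sum.
- exact: separated_addtop.
- exact: separated_addbot.
- exact: separated_iso f_bij f_mono _.
Qed.

Section RelatedAddTop.
Variables (T : finType) (le : rel T).
Hypothesis po : porder le.
Local Notation le' := (addtop le).

Lemma lower_addtop x : lower le' (Some x) = lower le x.
Proof.
rewrite /lower basic_addtop existsO inE (negbTE (not_basic_addtop_top x po)) /=.
by congr (_ && _); apply: eq_existsb => b; rewrite !inE basic_addtop.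
Qed.

Lemma upper_addtop x : upper le' (Some x) = upper le x.
Proof.
rewrite /upper basic_addtop existsO plt_top_addtop andbF /=.
by congr (_ && _); apply: eq_existsb => b; rewrite !inE basic_addtop.
Qed.

Lemma assoc_set_addtop x : assoc_set le' (Some x) = Some @: assoc_set le x.
Proof.
apply/setP => -[b|]; rewrite ?None_imset_Some ?(mem_imset _ _ Some_inj) !inE.
  by rewrite basic_addtop.
by rewrite (negbTE (not_basic_addtop_top x po)).
Qed.

Lemma assoc_addtop x (S : {set T}) : assoc le' (Some x) (Some @: S) = assoc le x S.
Proof.
rewrite /assoc forallO inE (negbTE (not_basic_addtop_top x po)) /=.
congr (_ && _).
  apply/subsetP/subsetP => sub b.
    by move=> bS; have := sub (Some b); rewrite (mem_imset _ _ Some_inj) !inE basic_addtop; apply.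
  case: b => [b|]; rewrite ?None_imset_Some // (mem_imset _ _ Some_inj) => /sub.
  by rewrite !inE basic_addtop.
by apply: eq_forallb => b; rewrite !inE basic_addtop (mem_imset _ _ Some_inj).
Qed.

Lemma related_addtop_Some x b :
  (Some b \in related le' (Some x)) = (b \in related le x).
Proof.
rewrite /related basic_addtop lower_addtop upper_addtop.
case: ifP => _; first by rewrite !inE.
case: ifP => _.
  by rewrite !inE existsO plt_top_addtop.
case: ifP => _; last by rewrite !inE.
by rewrite !inE existsO lower_addtop assoc_set_addtop assoc_addtop.
Qed.

Lemma related_addtop_None x :
  (None \in related le' (Some x)) = lower le x && [forall c, pcomp le c x].
Proof.
rewrite /related basic_addtop lower_addtop upper_addtop.
case: ifP => [bx | _]; first by rewrite in_set0 /lower bx.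
case: ifP => lx; last by case: ifP => _; rewrite !inE ?plt_top_addtop ?andbF.
rewrite inE existsO plt_addtop_top plt_top_addtop negb_exists /=.
by apply: eq_forallb => c; rewrite negbK.
Qed.

Lemma related_addtop x :
  related le' (Some x) =
    if lower le x && [forall c, pcomp le c x] then None |: Some @: related le x
    else Some @: related le x.
Proof.
apply/setP => -[b|]; case: ifP => cond;
  rewrite ?in_setU1 ?(mem_imset _ _ Some_inj) ?None_imset_Some //.
- by rewrite related_addtop_Some.
- by rewrite related_addtop_Some.
- by rewrite related_addtop_None.
- by rewrite related_addtop_None.
Qed.
End RelatedAddTop.

Theorem lemma3p15 (T : finType) (le : rel T) (A : {set T}) :
  isV le -> maximal_antichain le A ->
  (* (i) *)
  #|A :&: basics le| = #|(Some @: A) :&: basics (addtop le)| /\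
  (* (ii) *)
  (forall a, a \in A -> upper le a ->
     related (addtop le) (Some a) = Some @: related le a) /\
  (* (iii) *)
  (forall a, a \in A -> lower le a -> ~~ assoc le a (basics le) ->
     related (addtop le) (Some a) = Some @: related le a) /\
  (* (iv) *)
  (forall a, a \in A -> lower le a -> assoc le a (basics le) ->
     related (addtop le) (Some a) = None |: (Some @: related le a)).
Proof.
move=> /isV_separated [po _ sep] _.
split; [|split; [|split]].
- by rewrite setI_basics_addtop card_imset //; apply: Some_inj.
- move=> a _ ua; rewrite related_addtop // ifN //; apply/andP => -[la].
  case/andP: ua => _ /existsP [b1 /andP [bb1 lt1a]].
  case/andP: la => _ /existsP [b2 /andP [bb2 lta2]].
  rewrite !inE in bb1 bb2.
  by apply/negP; apply: between_basics_incomparable bb1 bb2 lt1a lta2.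
- by move=> a _ la na; rewrite related_addtop // -assoc_basicsE // la (negbTE na).
- by move=> a _ la aa; rewrite related_addtop // -assoc_basicsE // la aa.
Qed.
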